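(* For \(z \in \{ z \in \mathbb{C} : |\arg(z)| < \pi \}\) and \(n \in \mathbb{N}\), \[ {}_1F_1\left(\begin{matrix} 1 \\ z+1 \end{matrix}\,;\, z\right) = 1 + z + \cfrac{-z\cdot z}{(2z+2) + \cfrac{-z(z+1)}{(2z+3) + \cfrac{-z(z+2)}{(2z+4) + \cdots}}}, \] i.e. \(1+z+\mathop{\mathrm{K}}_{m=1}^{\infty}\frac{-z(m+z-1)}{m+2z+1}\), and \[ \int_0^1 (1-t)^{n-1} e^{tn}\, dt = \frac{1}{n}\left(1 + n + \mathop{\mathrm{K}}_{m=1}^{\infty}\frac{-n(m+n-1)}{m+2n+1}\right). \]
   Context: Here \(\mathop{\mathrm{K}}_{m=1}^{\infty}\frac{a_m}{b_m}\) denotes the continued fraction \(\cfrac{a_1}{b_1+\cfrac{a_2}{b_2+\cfrac{a_3}{b_3+\cdots}}}\) with partial numerators \(a_m\) and partial denominators \(b_m\); \({}_1F_1\) is the confluent hypergeometric function. *)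

From Stdlib Require Import Reals Factorial.
From Coquelicot Require Import Coquelicot.

Local Open Scope C_scope.

Fixpoint cpow (z : C) (k : nat) : C :=
  match k with O => 1 | S j => z * cpow z j end.

Fixpoint poch (a : C) (k : nat) : C :=
  match k with O => 1 | S j => poch a j * (a + RtoC (INR j)) end.

Definition hyp1F1_term (a b z : C) (k : nat) : C :=
  poch a k / poch b k * cpow z k / RtoC (INR (fact k)).

Definition abs_arg_lt_pi (z : C) : Prop :=
  z <> 0 /\ exists theta : R, (Rabs theta < PI)%R /\
    z = RtoC (Cmod z) * (cos theta, sin theta).

(* Wallis-Euler recurrences for the continued fraction K_{m>=1} a_m / b_m :
   returns ((A_{n-1}, A_n), (B_{n-1}, B_n)) with
   A_{-1}=1, A_0=0, B_{-1}=0, B_0=1,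
   A_n = b_n A_{n-1} + a_n A_{n-2},  B_n = b_n B_{n-1} + a_n B_{n-2}. *)
Fixpoint wallis (a b : nat -> C) (n : nat) : (C * C) * (C * C) :=
  match n with
  | O => ((RtoC 1, RtoC 0), (RtoC 0, RtoC 1))
  | S k =>
      let '((A1, A0), (B1, B0)) := wallis a b k in
      ((A0, b n * A0 + a n * A1), (B0, b n * B0 + a n * B1))
  end.

Definition cfA (a b : nat -> C) (n : nat) : C := snd (fst (wallis a b n)).
Definition cfB (a b : nat -> C) (n : nat) : C := snd (snd (wallis a b n)).

Definition cf_converges_to (a b : nat -> C) (v : C) : Prop :=
  (exists N : nat, forall n, (N <= n)%nat -> cfB a b n <> 0) /\
  filterlim (fun n => cfA a b n / cfB a b n) eventually (locally v).

(* The Wallis-Euler recurrences of the continued fraction have the closed-form solution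
   B_n = (n+1) (z+1)_n and A_n = B_n (s_n - 1 - z) + z^(n+1), where s_n is the n-th partial
   sum of 1F1(1; z+1; z) = sum_k z^k / (z+1)_k.  The n-th approximant is therefore
   s_n - 1 - z + z^(n+1) / B_n, and the last term is at most (|z| + 1) times the (n+1)-st
   term of the series, which converges by the ratio test (the ratio z / (z+k+1) tends to 0).
   For z = n a positive integer the series sums to n!/n^n (e^n - sum_(j<n) n^j/j!), while
   integration by parts gives int_0^1 (1-t)^m e^(tx) dt = m!/x^(m+1) (e^x - sum_(j<=m) x^j/j!). *)

From Stdlib Require Import Reals Lra Lia Factorial.
From Coquelicot Require Import Coquelicot.

Local Open Scope C_scope.

Lemma wallis_solution (a b F G : nat -> C) :
  F 0%nat = 0 -> F 1%nat = a 1%nat -> G 0%nat = 1 -> G 1%nat = b 1%nat ->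
  (forall n, F (S (S n)) = b (S (S n)) * F (S n) + a (S (S n)) * F n) ->
  (forall n, G (S (S n)) = b (S (S n)) * G (S n) + a (S (S n)) * G n) ->
  forall n, cfA a b n = F n /\ cfB a b n = G n.
Proof.
  intros F0 F1 G0 G1 Frec Grec.
  assert (Hw : forall n, wallis a b (S n) = ((F n, F (S n)), (G n, G (S n)))).
  { induction n as [|n IH].
    - cbn. rewrite F0, F1, G0, G1. f_equal; f_equal; ring.
    - change (wallis a b (S (S n))) with
        (let '((A1, A0), (B1, B0)) := wallis a b (S n) in
         ((A0, b (S (S n)) * A0 + a (S (S n)) * A1),
          (B0, b (S (S n)) * B0 + a (S (S n)) * B1))).
      rewrite IH, Frec, Grec. reflexivity. }
  intros [|n]; unfold cfA, cfB.
  - cbn. rewrite F0, G0. split; reflexivity.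
  - rewrite Hw. split; reflexivity.
Qed.

Definition kummer_coef (z : C) (k : nat) : C := cpow z k / poch (z + 1) k.
Definition cf_num (z : C) (m : nat) : C := - z * (RtoC (INR m) + z - 1).
Definition cf_den (z : C) (m : nat) : C := RtoC (INR m) + 2 * z + 1.
Definition wallis_B (z : C) (n : nat) : C := RtoC (INR (S n)) * poch (z + 1) n.
Definition wallis_A (z : C) (n : nat) : C :=
  wallis_B z n * (sum_n (kummer_coef z) n - 1 - z) + cpow z (S n).
Definition kummer_tail (z : C) (n : nat) : C := cpow z (S n) / wallis_B z n.

Lemma RtoC_INR_S n : RtoC (INR (S n)) = RtoC (INR n) + 1.
Proof. rewrite S_INR, RtoC_plus. reflexivity. Qed.

Lemma RtoC_2 : RtoC 2 = 1 + 1.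
Proof. rewrite <- RtoC_plus. f_equal. Qed.

Lemma is_lim_seq_Cmod_shift (z : C) : is_lim_seq (fun n => Cmod (z + 1 + RtoC (INR n))) p_infty.
Proof.
  apply (is_lim_seq_le_p_loc (fun n => INR n - Cmod z)%R).
  - exists 0%nat. intros n _.
    pose proof (Cmod_triangle (z + 1 + RtoC (INR n)) (- z)) as T.
    rewrite Cmod_opp in T.
    replace (z + 1 + RtoC (INR n) + - z) with (RtoC (1 + INR n)) in T by (rewrite RtoC_plus; ring).
    rewrite Cmod_R, Rabs_pos_eq in T by (pose proof (pos_INR n); lra). lra.
  - eapply is_lim_seq_plus; [apply is_lim_seq_INR | apply is_lim_seq_const | cbn; reflexivity].
Qed.

Lemma filterlim_Cplus (f g : nat -> C) (a b : C) :
  filterlim f eventually (locally a) -> filterlim g eventually (locally b) ->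
  filterlim (fun n => f n + g n) eventually (locally (a + b)).
Proof.
  intros Hf Hg. exact (filterlim_comp_2 f g Cplus Hf Hg (filterlim_plus (V := C_NormedModule) a b)).
Qed.

Section Kummer.

Variable z : C.
Hypothesis shift_neq0 : forall k, z + 1 + RtoC (INR k) <> 0.

Lemma poch_shift_neq0 n : poch (z + 1) n <> 0.
Proof.
  induction n as [|n IH]; cbn [poch].
  - exact C1_nz.
  - apply Cmult_neq_0; auto.
Qed.

Lemma wallis_B_rec n :
  wallis_B z (S (S n)) = cf_den z (S (S n)) * wallis_B z (S n) + cf_num z (S (S n)) * wallis_B z n.
Proof.
  unfold wallis_B, cf_den, cf_num. cbn [poch]. rewrite !RtoC_INR_S, RtoC_2. ring.
Qed.

Lemma wallis_A_rec n :
  wallis_A z (S (S n)) = cf_den z (S (S n)) * wallis_A z (S n) + cf_num z (S (S n)) * wallis_A z n.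
Proof.
  unfold wallis_A, wallis_B, cf_den, cf_num, kummer_coef. rewrite !sum_Sn. change plus with Cplus.
  cbn [poch cpow]. pose proof (poch_shift_neq0 n). pose proof (shift_neq0 n).
  pose proof (shift_neq0 (S n)). rewrite !RtoC_INR_S, RtoC_2 in *.
  field. auto.
Qed.

Lemma wallis_B_neq0 n : wallis_B z n <> 0.
Proof.
  apply Cmult_neq_0; [| apply poch_shift_neq0].
  intro H. apply RtoC_inj in H. apply (not_0_INR (S n)); auto.
Qed.

Lemma cf_kummer_approximant n :
  cfB (cf_num z) (cf_den z) n = wallis_B z n /\
  cfA (cf_num z) (cf_den z) n / cfB (cf_num z) (cf_den z) n =
    sum_n (kummer_coef z) n + kummer_tail z n - 1 - z.
Proof.
  destruct (wallis_solution (cf_num z) (cf_den z) (wallis_A z) (wallis_B z)) with (n := n)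
    as [-> ->]; auto using wallis_A_rec, wallis_B_rec.
  - unfold wallis_A, wallis_B, kummer_coef. rewrite sum_O. cbn. field.
  - unfold wallis_A, wallis_B, kummer_coef, cf_num. rewrite sum_Sn, sum_O. change plus with Cplus.
    pose proof (shift_neq0 0) as H0. cbn [poch cpow]. rewrite !RtoC_INR_S.
    cbn [INR] in *. rewrite !Cplus_0_r in *. field. exact H0.
  - unfold wallis_B. cbn [poch INR]. ring.
  - unfold wallis_B, cf_den. cbn [poch]. rewrite !RtoC_INR_S, RtoC_2. cbn [INR]. ring.
  - split; [reflexivity|]. unfold wallis_A, kummer_tail. field. apply wallis_B_neq0.
Qed.

Lemma kummer_coef_S n : kummer_coef z (S n) = kummer_coef z n * (z / (z + 1 + RtoC (INR n))).
Proof.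
  unfold kummer_coef. cbn [cpow poch].
  pose proof (poch_shift_neq0 n). pose proof (shift_neq0 n). field. auto.
Qed.

Lemma kummer_tail_eq n :
  kummer_tail z n = kummer_coef z (S n) * ((z + 1 + RtoC (INR n)) / RtoC (INR (S n))).
Proof.
  unfold kummer_tail, wallis_B, kummer_coef. cbn [cpow poch].
  pose proof (poch_shift_neq0 n). pose proof (shift_neq0 n).
  assert (RtoC (INR (S n)) <> 0) by (intro H'; apply RtoC_inj, not_0_INR in H'; auto).
  field. auto.
Qed.

Lemma Cmod_kummer_tail_le n :
  (Cmod (kummer_tail z n) <= (Cmod z + 1) * Cmod (kummer_coef z (S n)))%R.
Proof.
  rewrite kummer_tail_eq, Cmod_mult, Rmult_comm.
  apply Rmult_le_compat_r; [apply Cmod_ge_0|].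
  assert (Hn : (1 <= INR (S n))%R) by (apply (le_INR 1); lia).
  rewrite Cmod_div by (intro H; apply RtoC_inj in H; lra).
  rewrite Cmod_R, Rabs_pos_eq by lra.
  apply Rle_div_l; [lra|].
  replace (z + 1 + RtoC (INR n)) with (z + RtoC (INR (S n))) by (rewrite RtoC_INR_S; ring).
  eapply Rle_trans; [apply Cmod_triangle|].
  rewrite Cmod_R, Rabs_pos_eq by lra. pose proof (Cmod_ge_0 z). nra.
Qed.

Hypothesis z_neq0 : z <> 0.

Lemma kummer_coef_neq0 n : kummer_coef z n <> 0.
Proof.
  induction n as [|n IH].
  - unfold kummer_coef. cbn [cpow poch]. replace (1 / 1) with (RtoC 1) by field. exact C1_nz.
  - rewrite kummer_coef_S. apply Cmult_neq_0; [exact IH|].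
    apply Cmod_gt_0. rewrite Cmod_div by apply shift_neq0.
    apply Rdiv_lt_0_compat; apply Cmod_gt_0; auto.
Qed.

Lemma ex_series_Cmod_kummer_coef : ex_series (fun n => Cmod (kummer_coef z n)).
Proof.
  apply ex_series_Rabs, (ex_series_DAlembert _ 0); [lra| |].
  - intros n H. apply Cmod_eq_0 in H. exact (kummer_coef_neq0 n H).
  - apply (is_lim_seq_ext (fun n => (Cmod z * / Cmod (z + 1 + RtoC (INR n)))%R)).
    + intro n. rewrite kummer_coef_S, Cmod_mult, Cmod_div by apply shift_neq0.
      assert (0 < Cmod (kummer_coef z n))%R by apply Cmod_gt_0, kummer_coef_neq0.
      assert (0 < Cmod (z + 1 + RtoC (INR n)))%R by apply Cmod_gt_0, shift_neq0.
      rewrite Rabs_pos_eq; [field; lra|].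
      apply Rdiv_le_0_compat; [apply Rmult_le_pos, Rdiv_le_0_compat | ]; auto using Cmod_ge_0.
    + replace (Finite 0) with (Rbar_mult (Cmod z) (Rbar_inv p_infty))
        by (cbn; f_equal; ring).
      apply is_lim_seq_scal_l, is_lim_seq_inv; [apply is_lim_seq_Cmod_shift | discriminate].
Qed.

Lemma ex_series_kummer_coef : ex_series (kummer_coef z).
Proof.
  apply (ex_series_le (V := C_CompleteNormedModule) _ _ (fun n => Rle_refl _)).
  apply ex_series_Cmod_kummer_coef.
Qed.

Lemma kummer_tail_lim : filterlim (kummer_tail z) eventually (locally (RtoC 0)).
Proof.
  apply (filterlim_norm_zero (V := C_NormedModule)).
  change (is_lim_seq (fun n => Cmod (kummer_tail z n)) 0).
  apply (is_lim_seq_le_le (fun _ => 0%R) _ (fun n => (Cmod z + 1) * Cmod (kummer_coef z (S n)))%R).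
  - intro n. split; [apply Cmod_ge_0 | apply Cmod_kummer_tail_le].
  - apply is_lim_seq_const.
  - replace (Finite 0) with (Rbar_mult (Cmod z + 1)%R 0) by (cbn; f_equal; ring).
    apply is_lim_seq_scal_l, (is_lim_seq_incr_1 (fun n => Cmod (kummer_coef z n))).
    apply ex_series_lim_0, ex_series_Cmod_kummer_coef.
Qed.

Lemma cf_kummer_converges (s : C) :
  is_series (kummer_coef z) s -> cf_converges_to (cf_num z) (cf_den z) (s - 1 - z).
Proof.
  intro Hs. split.
  - exists 0%nat. intros n _. rewrite (proj1 (cf_kummer_approximant n)). apply wallis_B_neq0.
  - apply (filterlim_ext (fun n => sum_n (kummer_coef z) n + kummer_tail z n + - (1) + - z)).
    { intro n. rewrite (proj2 (cf_kummer_approximant n)). ring. }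
    replace (s - 1 - z) with (s + 0 + - (1) + - z) by ring.
    repeat apply filterlim_Cplus; auto using kummer_tail_lim; apply filterlim_const.
Qed.

End Kummer.

Lemma poch_1 n : poch 1 n = RtoC (INR (fact n)).
Proof.
  induction n as [|n IH]; [reflexivity|].
  cbn [poch fact]. rewrite IH, mult_INR, RtoC_mult, RtoC_INR_S. ring.
Qed.

Lemma hyp1F1_term_kummer_coef z n : hyp1F1_term 1 (z + 1) z n = kummer_coef z n.
Proof.
  unfold hyp1F1_term, kummer_coef. rewrite poch_1.
  assert (H : RtoC (INR (fact n)) <> 0)
    by (intro H; apply RtoC_inj in H; exact (INR_fact_neq_0 n H)).
  unfold Cdiv.
  transitivity (RtoC (INR (fact n)) * / RtoC (INR (fact n)) * (cpow z n * / poch (z + 1) n)); [ring|].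
  rewrite Cinv_r by exact H. ring.
Qed.

Lemma cos_gt_neg1 th : (Rabs th < PI)%R -> (-1 < cos th)%R.
Proof.
  intro H. rewrite <- cos_PI.
  replace (cos th) with (cos (Rabs th)) by (unfold Rabs; destruct Rcase_abs; auto using cos_neg).
  apply cos_decreasing_1; pose proof PI_RGT_0; pose proof (Rabs_pos th); lra.
Qed.

Lemma abs_arg_lt_pi_neq_neg z r : abs_arg_lt_pi z -> (0 < r)%R -> z <> RtoC (- r).
Proof.
  intros [_ [th [Hth Hz]]] Hr ->.
  rewrite Cmod_R, Rabs_left in Hz by lra.
  apply (f_equal fst) in Hz. cbn in Hz.
  pose proof (cos_gt_neg1 th Hth). nra.
Qed.

Lemma abs_arg_lt_pi_shift_neq0 z : abs_arg_lt_pi z -> forall k, z + 1 + RtoC (INR k) <> 0.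
Proof.
  intros Hz k H. apply (abs_arg_lt_pi_neq_neg z (1 + INR k) Hz); [pose proof (pos_INR k); lra|].
  rewrite RtoC_opp, RtoC_plus. rewrite <- (Cplus_0_l (- _)), <- H. ring.
Qed.

Lemma abs_arg_lt_pi_pos x : (0 < x)%R -> abs_arg_lt_pi (RtoC x).
Proof.
  intro Hx. split; [intro H; apply RtoC_inj in H; lra|].
  exists 0%R. rewrite Rabs_R0, cos_0, sin_0, Cmod_R, Rabs_pos_eq by lra.
  split; [exact PI_RGT_0|]. apply injective_projections; cbn; ring.
Qed.

Lemma cf_kummer_abs_arg (z s : C) :
  abs_arg_lt_pi z -> is_series (kummer_coef z) s -> cf_converges_to (cf_num z) (cf_den z) (s - 1 - z).
Proof. intro Hz. exact (cf_kummer_converges z (abs_arg_lt_pi_shift_neq0 z Hz) (proj1 Hz) s). Qed.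

Section ExpTail.

Local Open Scope R_scope.

Definition exp_tail (x : R) (m : nat) : R :=
  exp x - sum_f_R0 (fun j => x ^ j / INR (fact j)) m.

Lemma is_RInt_pow_exp_0 x :
  x <> 0 -> is_RInt (fun t => (1 - t) ^ 0 * exp (t * x)) 0 1 (INR (fact 0) / x ^ 1 * exp_tail x 0).
Proof.
  intro Hx.
  replace (INR (fact 0) / x ^ 1 * exp_tail x 0) with (minus (exp (1 * x) / x) (exp (0 * x) / x))
    by (unfold exp_tail, minus, plus, opp; cbn; rewrite Rmult_0_l, Rmult_1_l, exp_0; field; exact Hx).
  apply (is_RInt_derive (fun t => exp (t * x) / x)).
  - intros t _. auto_derive; [exact I | field; exact Hx].
  - intros t _. apply (ex_derive_continuous (V := R_NormedModule)). auto_derive. exact I.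
Qed.

Lemma is_RInt_pow_exp_by_parts x m : x <> 0 ->
  is_RInt (fun t => (1 - t) ^ S m * exp (t * x) - INR (S m) / x * ((1 - t) ^ m * exp (t * x)))
    0 1 (- / x).
Proof.
  intro Hx.
  replace (- / x) with (minus ((1 - 1) ^ S m * exp (1 * x) / x) ((1 - 0) ^ S m * exp (0 * x) / x))
    by (rewrite Rminus_diag, Rminus_0_r, pow1, pow_i by lia;
        unfold minus, plus, opp; cbn; rewrite !Rmult_0_l, exp_0; field; exact Hx).
  apply (is_RInt_derive (fun t => (1 - t) ^ S m * exp (t * x) / x)).
  - intros t _. auto_derive; [exact I|].
    change (match m with 0%nat => 1 | S _ => INR m + 1 end) with (INR (S m)).
    cbn [pow]. replace (1 + - t) with (1 - t) by ring. field. exact Hx.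
  - intros t _. apply (ex_derive_continuous (V := R_NormedModule)). auto_derive. exact I.
Qed.

Lemma is_RInt_pow_exp x m : x <> 0 ->
  is_RInt (fun t => (1 - t) ^ m * exp (t * x)) 0 1 (INR (fact m) / x ^ S m * exp_tail x m).
Proof.
  intro Hx. induction m as [|m IH]; [exact (is_RInt_pow_exp_0 x Hx)|].
  pose proof (is_RInt_plus _ _ _ _ _ _ (is_RInt_pow_exp_by_parts x m Hx)
                (is_RInt_scal _ _ _ (INR (S m) / x) _ IH)) as H.
  replace (INR (fact (S m)) / x ^ S (S m) * exp_tail x (S m))
    with (- / x + INR (S m) / x * (INR (fact m) / x ^ S m * exp_tail x m)).
  - eapply is_RInt_ext; [| exact H]. intros t _. unfold plus, scal; cbn. unfold mult; cbn. ring.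
  - unfold exp_tail. cbn [sum_f_R0 pow]. rewrite fact_simpl, mult_INR.
    pose proof (INR_fact_neq_0 m). pose proof (pow_nonzero x m Hx).
    field. repeat split; auto using not_0_INR.
Qed.

Lemma is_series_exp_tail x m :
  is_series (fun k => x ^ (S m + k) / INR (fact (S m + k))) (exp_tail x m).
Proof.
  apply (is_series_incr_n (fun j => x ^ j / INR (fact j))); [lia|].
  rewrite sum_n_Reals. cbn [Nat.pred]. unfold exp_tail, plus; cbn.
  replace (exp x - _ + _) with (exp x) by ring.
  eapply is_series_ext; [| exact (is_exp_Reals x)].
  intro j. unfold scal; cbn. unfold mult; cbn. rewrite pow_n_pow. unfold Rdiv. ring.
Qed.

Lemma is_series_pow_div_fact_shift x m : x <> 0 ->
  is_series (fun k => x ^ k * INR (fact (S m)) / INR (fact (S m + k)))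
    (INR (fact (S m)) / x ^ S m * exp_tail x m).
Proof.
  intro Hx.
  eapply is_series_ext;
    [| exact (is_series_scal_l (INR (fact (S m)) / x ^ S m) _ _ (is_series_exp_tail x m))].
  intro k. unfold scal, mult; cbn -[fact pow INR].
  replace (x ^ S (m + k)) with (x ^ S m * x ^ k) by (rewrite <- pow_add; reflexivity).
  pose proof (INR_fact_neq_0 (S m + k)). pose proof (pow_nonzero x (S m) Hx).
  field. auto.
Qed.

Lemma RInt_pow_exp_nat m :
  (RInt (fun t => (1 - t) ^ m * exp (t * INR (S m))) 0 1 : R) =
    / INR (S m) * (INR (fact (S m)) / INR (S m) ^ S m * exp_tail (INR (S m)) m).
Proof.
  assert (Hx : INR (S m) <> 0) by (apply not_0_INR; lia).
  rewrite (is_RInt_unique _ _ _ _ (is_RInt_pow_exp _ m Hx)).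
  rewrite fact_simpl, mult_INR. pose proof (pow_nonzero _ (S m) Hx). field. auto.
Qed.

End ExpTail.

Lemma is_series_RtoC (a : nat -> R) (l : R) :
  is_series a l -> is_series (fun k => RtoC (a k)) (RtoC l).
Proof.
  intro H. unfold is_series in *.
  apply (filterlim_ext (fun n => RtoC (sum_n a n))).
  - intro n. induction n as [|n IH]; [rewrite !sum_O; reflexivity|].
    rewrite !sum_Sn, <- IH. apply RtoC_plus.
  - eapply filterlim_comp; [exact H|].
    apply filterlim_locally. intros eps. exists eps. intros y Hy.
    apply (norm_compat1 (V := C_NormedModule)).
    change (Cmod (RtoC y - RtoC l) < eps)%R. rewrite <- RtoC_minus, Cmod_R. exact Hy.
Qed.

Lemma cpow_RtoC x k : cpow (RtoC x) k = RtoC (x ^ k).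
Proof. induction k as [|k IH]; [reflexivity|]. cbn. rewrite IH, RtoC_mult. reflexivity. Qed.

Lemma poch_nat n k : poch (RtoC (INR n) + 1) k = RtoC (INR (fact (n + k)) / INR (fact n)).
Proof.
  pose proof (INR_fact_neq_0 n). induction k as [|k IH].
  - rewrite Nat.add_0_r. cbn. f_equal. field. exact H.
  - cbn [poch]. rewrite IH, Nat.add_succ_r, fact_simpl, mult_INR, S_INR, plus_INR.
    rewrite <- !RtoC_plus, <- RtoC_mult. f_equal. field. exact H.
Qed.

Lemma is_series_kummer_coef_nat m :
  is_series (kummer_coef (RtoC (INR (S m))))
    (RtoC (INR (fact (S m)) / INR (S m) ^ S m * exp_tail (INR (S m)) m)).
Proof.
  eapply is_series_ext; [| apply is_series_RtoC, is_series_pow_div_fact_shift, not_0_INR; lia].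
  intro k. unfold kummer_coef. rewrite poch_nat, cpow_RtoC, <- RtoC_div.
  - f_equal. pose proof (INR_fact_neq_0 (S m)). pose proof (INR_fact_neq_0 (S m + k)).
    field. auto.
  - apply Rgt_not_eq, Rdiv_lt_0_compat; apply INR_fact_lt_0.
Qed.

Theorem corollary3p2 :
  (forall z : C, abs_arg_lt_pi z ->
     exists v : C,
       cf_converges_to (fun m => - z * (RtoC (INR m) + z - 1))
                       (fun m => RtoC (INR m) + 2 * z + 1) v /\
       is_series (hyp1F1_term 1 (z + 1) z) (1 + z + v)) /\
  (forall n : nat, (1 <= n)%nat ->
     exists v : C,
       cf_converges_to (fun m => - RtoC (INR n) * (RtoC (INR m) + RtoC (INR n) - 1))
                       (fun m => RtoC (INR m) + 2 * RtoC (INR n) + 1) v /\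
       RtoC (RInt (fun t => ((1 - t) ^ (n - 1) * exp (t * INR n))%R) 0 1)
         = / RtoC (INR n) * (1 + RtoC (INR n) + v)).
Proof.
  split.
  - intros z Hz.
    destruct (ex_series_kummer_coef z (abs_arg_lt_pi_shift_neq0 z Hz) (proj1 Hz)) as [s Hs].
    change C in s.
    exists (s - 1 - z). split; [exact (cf_kummer_abs_arg z s Hz Hs)|].
    replace (1 + z + (s - 1 - z)) with s by ring.
    eapply is_series_ext; [intro k; symmetry; apply hyp1F1_term_kummer_coef | exact Hs].
  - intros [|m] Hm; [lia|]. replace (S m - 1)%nat with m by lia.
    assert (Hx : (0 < INR (S m))%R) by (apply lt_0_INR; lia).
    pose proof (is_series_kummer_coef_nat m) as Hs.
    eexists. split; [exact (cf_kummer_abs_arg _ _ (abs_arg_lt_pi_pos _ Hx) Hs)|].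
    rewrite RInt_pow_exp_nat, RtoC_mult, RtoC_inv by lra. f_equal. ring.
Qed.
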